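(* Let $f,g\in C^{2}[0,1]$ be real-valued. Then for all $x\in[0,1]$ and $n\in\mathbb{N}$, $$n\left|B_{n}(fg)(x)-B_{n}(f)(x)B_{n}(g)(x)-\frac{x(1-x)}{n}f'(x)g'(x)\right|$$ $$\le\frac{x(1-x)}{2}\left[\tilde{\omega}_{1}\Big((fg)'';\frac{1}{3\sqrt{n}}\Big)+\|g\|\,\tilde{\omega}_{1}\Big(f'';\frac{1}{3\sqrt{n}}\Big)+\|f\|\,\tilde{\omega}_{1}\Big(g'';\frac{1}{3\sqrt{n}}\Big)+\frac{1}{2n}\|f''\|\,\|g''\|\right].$$
   Context: For $f:[0,1]\to\mathbb{R}$ the Bernstein polynomials are $B_{n}(f)(x)=\sum_{k=0}^{n}\binom{n}{k}x^{k}(1-x)^{n-k}f(k/n)$. $\|\cdot\|$ denotes the uniform norm on $C[0,1]$. For $h\in C[0,1]$, $\omega_{1}(h;t)=\sup\{|h(x)-h(y)|: x,y\in[0,1],|x-y|\le t\}$ is the first-order modulus of continuity, and $\tilde{\omega}_{1}(h;\cdot)$ denotes its least concave majorant. *)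

From HB Require Import structures.
From mathcomp Require Import all_boot all_order all_algebra.
From mathcomp Require Import all_classical all_reals all_analysis.
Set Implicit Arguments. Unset Strict Implicit. Unset Printing Implicit Defensive.
Import Order.TTheory GRing.Theory Num.Theory.
Import numFieldNormedType.Exports.
Local Open Scope classical_set_scope.
Local Open Scope ring_scope.

Section Defs.
Variable R : realType.

Definition I01 : set R := [set x | 0 <= x <= 1].

Definition bernstein (n : nat) (f : R -> R) (x : R) : R :=
  \sum_(k < n.+1) ('C(n, k))%:R * x ^+ k * (1 - x) ^+ (n - k) * f (k%:R / n%:R).

Definition unorm (h : R -> R) : R := sup [set `|h x| | x in I01].

Definition omega1 (h : R -> R) (t : R) : R :=
  sup [set d | exists x y, [/\ I01 x, I01 y, `|x - y| <= t & d = `|h x - h y|]].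

Definition concave_nonneg (phi : R -> R) : Prop :=
  forall a b l, 0 <= a -> 0 <= b -> 0 <= l <= 1 ->
    l * phi a + (1 - l) * phi b <= phi (l * a + (1 - l) * b).

Definition omega1_tilde (h : R -> R) (t : R) : R :=
  inf [set phi t | phi in [set phi : R -> R | concave_nonneg phi /\
         (forall s, 0 <= s -> omega1 h s <= phi s)]].

Definition deriv01 (f df : R -> R) : Prop :=
  forall x, I01 x ->
    (fun y => (f y - f x) / (y - x)) @ within I01 (nbhs x^') --> df x.

End Defs.

From HB Require Import structures.
From mathcomp Require Import all_boot all_order all_algebra.
From mathcomp Require Import all_classical all_reals all_analysis.
From mathcomp Require Import ring lra.
Import Order.TTheory GRing.Theory Num.Theory.
Import numFieldNormedType.Exports.
Local Open Scope classical_set_scope.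
Local Open Scope ring_scope.

Set Implicit Arguments. Unset Strict Implicit. Unset Printing Implicit Defensive.

(* Write a := x (1 - x) / (2 n), c := 1 / (3 sqrt n) and
   E_n(F) := B_n F x - F x - a F''(x).  Let phi be a concave majorant of
   omega1(F'') and m >= 0 a supergradient of phi at c.  Then
   |F''(u) - F''(x)| <= phi(c) + m (|u - x| - c), and integrating Taylor's
   formula at x against the Bernstein weights bounds |E_n(F)| by
   a phi(c) + m (M3 / 6 - c M2 / 2), where M2 = x (1 - x) / n is the second
   central moment and M3 <= M2 / sqrt n the third absolute one; the choice of
   c makes the m-term nonpositive.  Taking the infimum over phi gives
   |E_n(F)| <= a omega1_tilde(F''; c).  The product estimate follows from
   (fg)'' = f'' g + 2 f' g' + f g'' and the identity
   B(fg) - B f B g - 2 a f' g' = E(fg) - f E(g) - g E(f) - (B f - f) (B g - g),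
   together with |B_n F x - F x| <= a ||F''||. *)

Section Deriv01.
Variable R : realType.
Implicit Types (F G P : R -> R) (x t : R).

Lemma deriv01_dist_lt F F1 x : deriv01 F F1 -> I01 x ->
  forall e, 0 < e -> exists2 d, 0 < d &
    forall y, I01 y -> y != x -> `|y - x| < d ->
      `|F1 x - (F y - F x) / (y - x)| < e.
Proof.
move=> hF Ix e e0; have /cvgrPdist_lt/(_ e e0) := hF x Ix.
rewrite near_withinE => /nbhs_ballP[d d0 Hd]; exists d => // y Iy yx yd.
by apply: Hd Iy; rewrite // /ball /= distrC.
Qed.

Lemma deriv01_cont F F1 : deriv01 F F1 -> {within @I01 R, continuous F}.
Proof.
move=> hF; apply/subspace_continuousP => x Ix; apply/cvgrPdist_lt => e e0.
have [d d0 Hd] := deriv01_dist_lt hF Ix ltr01.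
rewrite near_withinE; apply/nbhs_ballP.
have M0 : 0 < `|F1 x| + 1 by rewrite ltr_pwDr.
exists (Num.min d (e / (`|F1 x| + 1))); first by rewrite /= lt_min d0 divr_gt0.
move=> y; rewrite /ball /= lt_min distrC => /andP[yd ye] Iy.
have [->|yx] := eqVneq y x; first by rewrite subrr normr0.
have yx0 : y - x != 0 by rewrite subr_eq0.
set q := (F y - F x) / (y - x).
have qM : `|q| <= `|F1 x| + 1.
  rewrite -[q](subKr (F1 x)) (le_trans (ler_normB _ _)) // lerD2l ltW //.
  by apply: Hd; rewrite // distrC.
rewrite -normrN opprB -(divfK yx0 (F y - F x)) -/q normrM.
apply: (le_lt_trans (ler_wpM2r (normr_ge0 _) qM)).
by rewrite mulrC -ltr_pdivlMr.
Qed.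

Lemma deriv01_is_derive F F1 x : deriv01 F F1 -> 0 < x < 1 ->
  is_derive x 1 F (F1 x).
Proof.
move=> hF /andP[x0 x1]; have Ix : I01 x by rewrite /I01 /= !ltW.
apply/is_derive1_caratheodory.
exists (fun z => if z == x then F1 x else (F z - F x) / (z - x)); split.
- move=> z; case: eqP => [->|/eqP]; first by rewrite !subrr mulr0.
  by rewrite -subr_eq0 => /divfK->.
- apply/continuous_withinNx; rewrite eqxx; apply/cvgrPdist_lt => e e0.
  have [d d0 Hd] := deriv01_dist_lt hF Ix e0.
  rewrite near_withinE; apply/nbhs_ballP.
  exists (Num.min d (Num.min x (1 - x))); first by rewrite /= !lt_min d0 x0 subr_gt0 x1.
  move=> y; rewrite /ball /= !lt_min distrC => /andP[yd /andP[yx0 yx1]] yx.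
  rewrite (negbTE yx); apply: Hd => //; rewrite /I01 /=.
  by move: yx0 yx1; rewrite distrC !ltr_norml => /andP[? ?] /andP[? ?]; lra.
- by rewrite eqxx.
Qed.

Lemma is_derive_deriv01 P P1 : (forall u : R, is_derive u 1 P (P1 u)) -> deriv01 P P1.
Proof.
move=> hP x _; have /is_derive1_caratheodory[g [PE gC <-]] := hP x.
apply: (@cvg_trans _ (g @ within (@I01 R) x^')).
  apply: near_eq_cvg; rewrite near_withinE; near=> y => _.
  by rewrite PE mulfK // subr_eq0; near: y; exact: nbhs_dnbhs_neq.
apply: cvg_trans (cvg_app g (cvg_within (@I01 R))) _.
exact/continuous_withinNx.
Unshelve. all: end_near.
Qed.

Lemma deriv01D F F1 G G1 : deriv01 F F1 -> deriv01 G G1 ->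
  deriv01 (fun u => F u + G u) (fun u => F1 u + G1 u).
Proof.
move=> hF hG x Ix; apply: cvg_trans (cvgD (hF x Ix) (hG x Ix)).
by apply: near_eq_cvg; apply: nearW => y; rewrite /= -mulrDl addrACA opprD.
Qed.

Lemma deriv01Z k F F1 : deriv01 F F1 ->
  deriv01 (fun u => k * F u) (fun u => k * F1 u).
Proof.
move=> hF x Ix; apply: cvg_trans (cvgM (cvg_cst k) (hF x Ix)).
by apply: near_eq_cvg; apply: nearW => y; rewrite /= mulrA mulrBr.
Qed.

Lemma deriv01_ndecr F F1 (a b : R) : 0 <= a -> a <= b -> b <= 1 ->
  deriv01 F F1 -> (forall u, a < u < b -> 0 <= F1 u) -> F a <= F b.
Proof.
move=> a0 ab b1 hF F1ge0; move: ab; rewrite le_eqVlt => /predU1P[<-//|ab].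
have hd u : u \in `]a, b[ -> is_derive u 1 F (F1 u).
  by rewrite in_itv /= => /andP[? ?]; apply: deriv01_is_derive hF _; lra.
have hc : {within `[a, b], continuous F}.
  apply: continuous_subspaceW (deriv01_cont hF) => u /=.
  by rewrite in_itv /= /I01 /= => /andP[? ?]; lra.
have [c] := MVT ab hd hc; rewrite in_itv /= => /andP[ac cb] e.
by rewrite -subr_ge0 e mulr_ge0 ?F1ge0 ?ac // subr_ge0 ltW.
Qed.

Lemma deriv01_abs_le G G1 P P1 (a b : R) : 0 <= a -> a <= b -> b <= 1 ->
  deriv01 G G1 -> deriv01 P P1 -> (forall u, a < u < b -> `|G1 u| <= P1 u) ->
  `|G b - G a| <= P b - P a.
Proof.
move=> a0 ab b1 hG hP G1P1.
have mono (s : R) : `|s| = 1 -> P a + s * G a <= P b + s * G b.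
  move=> s1; apply: (deriv01_ndecr a0 ab b1 (deriv01D hP (deriv01Z (k := s) hG))).
  move=> u /G1P1 hu; have := ler_norm (- (s * G1 u)).
  by rewrite normrN normrM s1 mul1r; lra.
have := mono 1 (normr1 _); have := mono (-1); rewrite normrN normr1 => /(_ erefl).
by rewrite ler_norml; lra.
Qed.

Lemma is_derive_comp_affine (Phi phi : R -> R) (k c u : R) :
  (forall r : R, is_derive r 1 Phi (phi r)) ->
  is_derive u 1 (fun z => Phi (k * z + c)) (k * phi (k * u + c)).
Proof.
move=> hPhi; have /is_derive1_caratheodory[g [PhiE gC <-]] := hPhi (k * u + c).
apply/is_derive1_caratheodory; exists (fun z => k * g (k * z + c)); split => //.
- by move=> z; rewrite PhiE; ring.
- apply: cvgM; first exact: cvg_cst.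
  apply: (cvg_comp (fun z => k * z + c) g) gC.
  by apply: cvgD; [apply: cvgM; [exact: cvg_cst|exact: cvg_id]|exact: cvg_cst].
Qed.

Lemma deriv01_dist_le G G1 (Phi phi : R -> R) x t : I01 x -> I01 t ->
  deriv01 G G1 -> (forall r : R, is_derive r 1 Phi (phi r)) ->
  (forall u, 0 < u < 1 -> `|G1 u| <= phi `|u - x|) ->
  `|G t - G x| <= Phi `|t - x| - Phi 0.
Proof.
rewrite /I01 /= => /andP[x0 x1] /andP[t0 t1] hG hPhi G1phi.
have [xt|tx] := leP x t.
  have hP := is_derive_deriv01 (fun u => is_derive_comp_affine 1 (- x) u hPhi).
  have := deriv01_abs_le x0 xt t1 hG hP; rewrite /= !mul1r addrN.
  rewrite [`|t - x|]ger0_norm ?subr_ge0 //; apply => u /andP[xu ut].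
  rewrite !mul1r -[u - x]ger0_norm; last by rewrite subr_ge0 ltW.
  apply: G1phi; lra.
have hP := deriv01Z (k := -1)
  (is_derive_deriv01 (fun u => is_derive_comp_affine (-1) x u hPhi)).
have dist u : u <= x -> -1 * u + x = `|u - x|.
  by move=> ux; rewrite ler0_norm ?subr_le0 //; ring.
rewrite distrC; apply: le_trans (deriv01_abs_le t0 (ltW tx) x1 hG hP _) _.
  move=> u /andP[tu ux]; rewrite mulrA mulrNN !mul1r dist; last exact: ltW.
  apply: G1phi; lra.
rewrite (dist t (ltW tx)) (dist x) // subrr normr0; lra.
Qed.

Lemma deriv01_taylor2_le F F1 F2 (K A m c x t : R) : I01 x -> I01 t ->
  deriv01 F F1 -> deriv01 F1 F2 ->
  (forall u, 0 < u < 1 -> `|F2 u - K| <= A + m * (`|u - x| - c)) ->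
  `|F t - F x - F1 x * (t - x) - K * (t - x) ^+ 2 / 2| <=
    A * `|t - x| ^+ 2 / 2 + m * (`|t - x| ^+ 3 / 6 - c * `|t - x| ^+ 2 / 2).
Proof.
move=> Ix It hF hF1 F2K.
pose Phi1 r := A * r + m * (r ^+ 2 / 2 - c * r).
have dPhi1 (r : R) : is_derive r 1 Phi1 (A + m * (r - c)).
  by apply: is_derive_eq; rewrite /GRing.scale /=; field.
have dPhi2 (r : R) :
    is_derive r 1 (fun r => A * r ^+ 2 / 2 + m * (r ^+ 3 / 6 - c * r ^+ 2 / 2)) (Phi1 r).
  by apply: is_derive_eq; rewrite /Phi1 /GRing.scale /=; field.
have lin1 : deriv01 (fun u => - K * u) (fun => - K).
  by apply: is_derive_deriv01 => u; apply: is_derive_eq; rewrite /GRing.scale /=; ring.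
have step1 u : I01 u -> `|F1 u - F1 x - K * (u - x)| <= Phi1 `|u - x|.
  move=> Iu; have := deriv01_dist_le Ix Iu (deriv01D hF1 lin1) dPhi1 F2K.
  have -> : F1 u - F1 x - K * (u - x) = F1 u + - K * u - (F1 x + - K * x) by ring.
  by rewrite /Phi1 !expr0n /= !(mulr0, mul0r, subr0, addr0).
have quad : deriv01 (fun u => - F1 x * u - K * (u - x) ^+ 2 / 2)
    (fun u => - F1 x - K * (u - x)).
  by apply: is_derive_deriv01 => u; apply: is_derive_eq; rewrite /GRing.scale /=; field.
have := deriv01_dist_le Ix It (deriv01D hF quad) dPhi2 _.
have -> : F t - F x - F1 x * (t - x) - K * (t - x) ^+ 2 / 2 =
  F t + (- F1 x * t - K * (t - x) ^+ 2 / 2) - (F x + (- F1 x * x - K * (x - x) ^+ 2 / 2)).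
  by ring.
rewrite !expr0n /= !(mulr0, mul0r, subr0, addr0); apply => u /andP[u0 u1].
have -> : F1 u + (- F1 x - K * (u - x)) = F1 u - F1 x - K * (u - x) by ring.
by apply: step1; rewrite /I01 /= !ltW.
Qed.

End Deriv01.

Section BernsteinMoments.
Variable R : realType.

Definition bern_basis (n k : nat) (x : R) : R :=
  ('C(n, k))%:R * x ^+ k * (1 - x) ^+ (n - k).

Lemma bernsteinE n F x :
  bernstein n F x = \sum_(k < n.+1) bern_basis n k x * F (k%:R / n%:R).
Proof. by []. Qed.

Lemma bern_basis_ge0 n k x : 0 <= x <= 1 -> 0 <= bern_basis n k x.
Proof.
by case/andP=> x0 x1; rewrite /bern_basis !mulr_ge0 ?exprn_ge0 ?subr_ge0.
Qed.

Lemma sum_bern_basis n x : \sum_(k < n.+1) bern_basis n k x = 1.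
Proof.
rewrite -(expr1n _ n) -(subrK x 1) exprDn.
by apply: eq_bigr => k _; rewrite /bern_basis -mulr_natl; ring.
Qed.

Lemma natr_ffact k j : ((k ^_ j)%:R : R) = \prod_(i < j) (k%:R - i%:R).
Proof.
elim: j k => [|j IH] [|k]; rewrite ?big_ord0 // big_ord_recl /= subr0 ?mul0r //.
rewrite ffactSS natrM IH; congr (_ * _); apply: eq_bigr => i _.
by rewrite /bump /= natrD -natr1; ring.
Qed.

Lemma sum_bern_basis_ffact n x j :
  \sum_(k < n.+1) bern_basis n k x * (k ^_ j)%:R = (n ^_ j)%:R * x ^+ j.
Proof.
elim: j n => [|j IH] n.
  by under eq_bigr do rewrite ffactn0 mulr1; rewrite sum_bern_basis mul1r.
case: n => [|n]; first by rewrite big_ord_recl big_ord0 /= ffact0n mulr0 mul0r addr0.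
rewrite big_ord_recl /= ffact0n mulr0 add0r ffactSS natrM exprS.
rewrite -[_ * (x * _)]mulrA [_ * (x * _)]mulrCA -IH !mulr_sumr.
apply: eq_bigr => i _; rewrite /bern_basis /bump /= ffactSS subSS !natrM exprS.
have := mul_bin_diag n.+1 i; rewrite /= => e.
have e' : (n.+1%:R * 'C(n, i)%:R : R) = i.+1%:R * 'C(n.+1, 1 + i)%:R.
  by rewrite -!natrM e.
transitivity (n.+1%:R * 'C(n, i)%:R * (x * x ^+ i) * (1 - x) ^+ (n - i) * (i ^_ j)%:R).
  by rewrite e'; ring.
by ring.
Qed.

Lemma sum_bern_basis_ffact_poly n x (a : seq R) (g : R -> R) :
  (forall K, g K = \sum_(j < size a) a`_j * \prod_(i < j) (K - i%:R)) ->
  \sum_(k < n.+1) bern_basis n k x * g k%:R =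
    \sum_(j < size a) a`_j * \prod_(i < j) (n%:R - i%:R) * x ^+ j.
Proof.
move=> gE; under eq_bigr do rewrite gE mulr_sumr.
rewrite exchange_big /=; apply: eq_bigr => j _.
rewrite -natr_ffact -mulrA -sum_bern_basis_ffact mulr_sumr.
by apply: eq_bigr => k _; rewrite natr_ffact; ring.
Qed.

End BernsteinMoments.

Local Ltac expand_small_bigops :=
  rewrite /=; do ![rewrite big_ord_recr /= | rewrite big_ord0 /=].

Section BernsteinCentralMoments.
Variable R : realType.
Variables (n : nat) (x : R).
Hypothesis n_gt0 : (0 < n)%N.

Let nR_gt0 : (0 : R) < n%:R. Proof. by rewrite ltr0n. Qed.
Let nR_neq0 : (n%:R : R) != 0. Proof. by rewrite gt_eqF. Qed.

Lemma bern_moment1 : \sum_(k < n.+1) bern_basis n k x * (k%:R / n%:R - x) = 0.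
Proof.
rewrite (@sum_bern_basis_ffact_poly _ _ _ [:: - x; n%:R^-1]
  (fun K => K / n%:R - x)) => [|K]; by expand_small_bigops; field.
Qed.

Lemma bern_moment2 :
  \sum_(k < n.+1) bern_basis n k x * (k%:R / n%:R - x) ^+ 2 = x * (1 - x) / n%:R.
Proof.
rewrite (@sum_bern_basis_ffact_poly _ _ _
  [:: x ^+ 2; (1 - 2 * n%:R * x) / n%:R ^+ 2; n%:R ^- 2]
  (fun K => (K / n%:R - x) ^+ 2)) => [|K]; by expand_small_bigops; field.
Qed.

Lemma bern_moment4 :
  \sum_(k < n.+1) bern_basis n k x * (k%:R / n%:R - x) ^+ 4 =
    x * (1 - x) * (3 * (n%:R - 2) * x * (1 - x) + 1) / n%:R ^+ 3.
Proof.
pose y := n%:R * x.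
rewrite (@sum_bern_basis_ffact_poly _ _ _
  [:: x ^+ 4; (1 - 4 * y + 6 * y ^+ 2 - 4 * y ^+ 3) / n%:R ^+ 4;
      (7 - 12 * y + 6 * y ^+ 2) / n%:R ^+ 4; (6 - 4 * y) / n%:R ^+ 4; n%:R ^- 4]
  (fun K => (K / n%:R - x) ^+ 4)) => [|K]; by expand_small_bigops; rewrite /y; field.
Qed.

Lemma bern_moment3_abs_le : 0 <= x <= 1 ->
  \sum_(k < n.+1) bern_basis n k x * `|k%:R / n%:R - x| ^+ 3 <=
    x * (1 - x) / n%:R / Num.sqrt n%:R.
Proof.
move=> x01; set s := Num.sqrt (n%:R : R).
have s_gt0 : 0 < s by rewrite sqrtr_gt0.
(* AM-GM; the fourth moment being O(1/n^2), this yields the O(n^(-3/2)) bound. *)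
have amgm (d : R) : `|d| ^+ 3 <= (d ^+ 2 / s + s * d ^+ 4) / 2.
  have d2 : d ^+ 2 = `|d| ^+ 2 by rewrite real_normK ?num_real.
  rewrite -[d ^+ 4]/(d ^+ (2 * 2)) exprM d2 -subr_ge0.
  have -> : (`|d| ^+ 2 / s + s * (`|d| ^+ 2) ^+ 2) / 2 - `|d| ^+ 3 =
      (`|d| * (1 - s * `|d|)) ^+ 2 / (2 * s) by field; rewrite gt_eqF.
  by rewrite divr_ge0 ?sqr_ge0 // mulr_ge0 // ltW.
apply: le_trans (_ : _ <= (x * (1 - x) / n%:R / s +
    s * (x * (1 - x) * (3 * (n%:R - 2) * x * (1 - x) + 1) / n%:R ^+ 3)) / 2) _.
  rewrite -bern_moment2 -bern_moment4 mulr_suml mulr_sumr -big_split /= mulr_suml.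
  apply: ler_sum => k _; rewrite (_ : _ / 2 = bern_basis n k x *
    (((k%:R / n%:R - x) ^+ 2 / s + s * (k%:R / n%:R - x) ^+ 4) / 2)); last by ring.
  by apply: ler_wpM2l; [exact: bern_basis_ge0|exact: amgm].
set w := x * (1 - x).
case/andP: x01 => x0 x1; have w0 : 0 <= w by rewrite mulr_ge0 ?subr_ge0.
have w1 : w <= 1 / 4.
  by rewrite -subr_ge0 (_ : _ - w = (x - 1 / 2) ^+ 2) ?sqr_ge0 //; rewrite /w; field.
have M4_le : w * (3 * (n%:R - 2) * x * (1 - x) + 1) / n%:R ^+ 3 <= w / n%:R / n%:R.
  have n1 : (1 : R) <= n%:R by rewrite ler1n.
  rewrite -subr_ge0 (_ : _ - _ = w * (n%:R - 3 * (n%:R - 2) * w - 1) / n%:R ^+ 3).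
    by apply: divr_ge0; [apply: mulr_ge0 => //; nra|rewrite exprn_ge0 // ltW].
  by rewrite /w; field.
apply: le_trans (_ : (w / n%:R / s + s * (w / n%:R / n%:R)) / 2 <= _).
  by rewrite ler_pM2r ?invr_gt0 // lerD2l ler_wpM2l // ltW.
have ns : (n%:R : R) = s ^+ 2 by rewrite sqr_sqrtr // ltW.
rewrite ns -[X in _ <= X](_ : (w / s ^+ 2 / s + s * (w / s ^+ 2 / s ^+ 2)) / 2 = _) //.
by field; rewrite gt_eqF.
Qed.

End BernsteinCentralMoments.

Section ModulusOfContinuity.
Variable R : realType.
Implicit Types (F phi : R -> R) (s t : R).

Definition bounded01 F := has_ubound [set `|F x| | x in @I01 R].

Lemma I01_0 : @I01 R 0. Proof. by rewrite /I01 /= lexx ler01. Qed.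

Lemma bounded01_interior F (M : R) : (forall u : R, 0 < u < 1 -> `|F u| <= M) ->
  bounded01 F.
Proof.
move=> FM; exists (`|F 0| + `|F 1| + `|M|) => _ [u /andP[u0 u1] <-].
have := normr_ge0 (F 0); have := normr_ge0 (F 1); have := normr_ge0 M.
have [-> ? ? ?|u_neq0] := eqVneq u 0; first lra.
have [-> ? ? ?|u_neq1] := eqVneq u 1; first lra.
have := ler_norm M.
have : `|F u| <= M by apply: FM; rewrite !lt_neqAle eq_sym u_neq0 u_neq1 u0 u1.
lra.
Qed.

Lemma bounded01_cont F : {within @I01 R, continuous F} -> bounded01 F.
Proof.
move=> cF; have cF' : {within `[0, 1], continuous F}.
  by apply: continuous_subspaceW cF => u /=; rewrite in_itv.
have [M _ FM] := EVT_max ler01 cF'; have [m _ Fm] := EVT_min ler01 cF'.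
exists (`|F M| + `|F m|) => _ [u Iu <-].
have u01 : u \in `[(0 : R), 1] by rewrite in_itv.
have := FM u u01; have := Fm u u01.
have := normr_ge0 (F M); have := normr_ge0 (F m).
have := ler_norm (F M); have := ler_norm (- F m); rewrite normrN ler_norml.
by move=> *; apply/andP; split; lra.
Qed.

Lemma unorm_ub F u : bounded01 F -> I01 u -> `|F u| <= unorm F.
Proof. by move=> bF Iu; apply: ub_le_sup => //; exists u. Qed.

Lemma unorm_ge0 F : bounded01 F -> 0 <= unorm F.
Proof. by move=> bF; apply: le_trans (unorm_ub bF I01_0). Qed.

Lemma omega1_bounded F s : bounded01 F ->
  [set d | exists x y, [/\ I01 x, I01 y, `|x - y| <= s & d = `|F x - F y|]]
    `<=` [set d | d <= unorm F + unorm F].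
Proof.
move=> bF _ [x [y [Ix Iy _ ->]]] /=.
by rewrite (le_trans (ler_normB _ _)) // lerD // unorm_ub.
Qed.

Lemma omega1_ub F u v : bounded01 F -> I01 u -> I01 v ->
  `|F u - F v| <= omega1 F `|u - v|.
Proof.
move=> bF Iu Iv; apply: ub_le_sup; last by exists u, v.
by exists (unorm F + unorm F); apply: omega1_bounded.
Qed.

Lemma omega1_ge0 F s : bounded01 F -> 0 <= s -> 0 <= omega1 F s.
Proof.
move=> bF s0; apply: ub_le_sup.
  by exists (unorm F + unorm F); apply: omega1_bounded.
by exists 0, 0; rewrite !subrr normr0; split => //; exact: I01_0.
Qed.

Lemma omega1_le F s : bounded01 F -> 0 <= s -> omega1 F s <= unorm F + unorm F.
Proof.
move=> bF s0; apply: ge_sup; last exact: omega1_bounded.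
by exists 0, 0, 0; rewrite !subrr normr0; split => //; exact: I01_0.
Qed.

Lemma concave_slope_le phi u c w : concave_nonneg phi -> 0 <= u -> u < c -> c < w ->
  (phi w - phi c) / (w - c) <= (phi c - phi u) / (c - u).
Proof.
move=> phi_cvx u0 uc cw.
have wu : 0 < w - u by rewrite subr_gt0 (lt_trans uc).
have wc : 0 < w - c by rewrite subr_gt0.
have cu : 0 < c - u by rewrite subr_gt0.
pose l := (w - c) / (w - u).
have l01 : 0 <= l <= 1.
  apply/andP; split; first by rewrite divr_ge0 // ltW.
  by rewrite ler_pdivrMr // mul1r lerD2l lerN2 ltW.
have := phi_cvx u w l u0 (le_trans u0 (ltW (lt_trans uc cw))) l01.
have -> : l * u + (1 - l) * w = c by rewrite /l; field; rewrite gt_eqF.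
rewrite -(ler_pM2l wu) (_ : _ * _ = (w - c) * phi u + (c - u) * phi w).
  move=> H; rewrite -subr_ge0 (_ : _ - _ =
    ((w - u) * phi c - ((w - c) * phi u + (c - u) * phi w)) / ((c - u) * (w - c))).
    by rewrite divr_ge0 ?subr_ge0 // mulr_ge0 // ltW.
  by field; rewrite !gt_eqF.
by rewrite /l; field; rewrite gt_eqF.
Qed.

(* The supergradient is the supremum of the slopes of phi to the right of [c]. *)
Lemma concave_supergradient phi c : concave_nonneg phi -> 0 < c ->
  (forall s, 0 <= s -> 0 <= phi s) ->
  exists2 m, 0 <= m & forall u, 0 <= u -> phi u <= phi c + m * (u - c).
Proof.
move=> phi_cvx c0 phi_ge0.
pose S := [set (phi w - phi c) / (w - c) | w in [set w | c < w]].
have S0 : S !=set0.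
  by exists ((phi (c + 1) - phi c) / (c + 1 - c)), (c + 1); rewrite //= ltrDl.
have S_ub : ubound S ((phi c - phi 0) / (c - 0)).
  by move=> _ [w /= cw <-]; apply: concave_slope_le.
have hS : has_ubound S by exists ((phi c - phi 0) / (c - 0)).
have super u : 0 <= u -> phi u <= phi c + sup S * (u - c).
  move=> u0; have [uc|cu|->] := ltgtP u c; last by rewrite subrr mulr0 addr0.
  - have : sup S <= (phi c - phi u) / (c - u).
      by apply: ge_sup => // _ [w /= cw <-]; apply: concave_slope_le.
    by rewrite ler_pdivlMr ?subr_gt0 //; nra.
  - have : (phi u - phi c) / (u - c) <= sup S by apply: ub_le_sup => //; exists u.
    by rewrite ler_pdivrMr ?subr_gt0 //; nra.
exists (sup S) => //; rewrite leNgt; apply/negP => S_lt0.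
pose u := c + (phi c + 1) / (- sup S).
have u0 : 0 <= u.
  by rewrite addr_ge0 ?ltW // divr_gt0 ?oppr_gt0 // ltr_pwDr ?phi_ge0 ?ltW.
have := super u u0; have := phi_ge0 u u0.
have -> : phi c + sup S * (u - c) = -1 by rewrite /u; field; rewrite lt_eqF.
by lra.
Qed.

Lemma omega1_cst_majorant F : bounded01 F ->
  concave_nonneg (fun => unorm F + unorm F) /\
  (forall s, 0 <= s -> omega1 F s <= unorm F + unorm F).
Proof.
move=> bF; split; last by move=> s; apply: omega1_le.
by move=> ? ? ? _ _ _; rewrite -mulrDl subrKC mul1r.
Qed.

Lemma le_omega1_tilde F t (L a : R) : bounded01 F -> 0 <= a ->
  (forall phi, concave_nonneg phi -> (forall s, 0 <= s -> omega1 F s <= phi s) ->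
     L <= a * phi t) ->
  L <= a * omega1_tilde F t.
Proof.
move=> bF; have [cst_cvx cst_maj] := omega1_cst_majorant bF.
rewrite le_eqVlt => /predU1P[<- L_le|a_gt0 L_le].
  by have := L_le _ cst_cvx cst_maj; rewrite !mul0r.
rewrite mulrC -ler_pdivrMr //; apply: lb_le_inf.
  by exists (unorm F + unorm F), (fun => unorm F + unorm F);
    first exact: omega1_cst_majorant.
by move=> _ [phi [phi_cvx phi_maj] <-]; rewrite ler_pdivrMr // mulrC L_le.
Qed.

End ModulusOfContinuity.

Section Voronovskaya.
Variable R : realType.
Implicit Types F : R -> R.

Lemma I01_grid n (k : 'I_n.+1) : (0 < n)%N -> @I01 R (k%:R / n%:R).
Proof.
move=> n0; rewrite /I01 /= divr_ge0 ?ler0n //=.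
by rewrite ler_pdivrMr ?ltr0n // mul1r ler_nat -ltnS.
Qed.

(* The constant 1/(3 sqrt n) is the one for which the cubic Taylor term is
   absorbed by the quadratic one, by bern_moment3_abs_le. *)
Lemma bernstein_taylor_le F F1 F2 n (x A m K : R) :
  deriv01 F F1 -> deriv01 F1 F2 -> (0 < n)%N -> I01 x -> 0 <= m ->
  (forall u, 0 < u < 1 ->
     `|F2 u - K| <= A + m * (`|u - x| - 1 / (3 * Num.sqrt n%:R))) ->
  `|bernstein n F x - F x - x * (1 - x) / (2 * n%:R) * K| <=
    x * (1 - x) / (2 * n%:R) * A.
Proof.
move=> hF hF1 n0 Ix m0 F2K; pose c : R := 1 / (3 * Num.sqrt n%:R).
have nR_gt0 : (0 : R) < n%:R by rewrite ltr0n.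
have s_gt0 : (0 : R) < Num.sqrt n%:R by rewrite sqrtr_gt0.
pose d (k : 'I_n.+1) := k%:R / n%:R - x.
have -> : bernstein n F x - F x - x * (1 - x) / (2 * n%:R) * K =
    \sum_(k < n.+1) bern_basis n k x *
      (F (k%:R / n%:R) - F x - F1 x * d k - K * d k ^+ 2 / 2).
  rewrite (eq_bigr (fun k : 'I_n.+1 => bern_basis n k x * F (k%:R / n%:R) -
    (bern_basis n k x * F x + F1 x * (bern_basis n k x * d k)) -
    K / 2 * (bern_basis n k x * d k ^+ 2))); last by move=> k _; ring.
  rewrite !sumrB big_split /= -!mulr_sumr -mulr_suml sum_bern_basis.
  by rewrite bern_moment1 // bern_moment2 // bernsteinE; field; rewrite gt_eqF.
apply: le_trans (ler_norm_sum _ _ _) _.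
apply: le_trans (_ : _ <= \sum_(k < n.+1) bern_basis n k x *
    (A * `|d k| ^+ 2 / 2 + m * (`|d k| ^+ 3 / 6 - c * `|d k| ^+ 2 / 2))) _.
  apply: ler_sum => k _; rewrite normrM ger0_norm ?bern_basis_ge0 //.
  apply: ler_wpM2l; first exact: bern_basis_ge0.
  exact: deriv01_taylor2_le Ix (I01_grid k n0) hF hF1 F2K.
have -> : \sum_(k < n.+1) bern_basis n k x *
    (A * `|d k| ^+ 2 / 2 + m * (`|d k| ^+ 3 / 6 - c * `|d k| ^+ 2 / 2)) =
    (A - m * c) / 2 * (\sum_(k < n.+1) bern_basis n k x * d k ^+ 2)
    + m / 6 * (\sum_(k < n.+1) bern_basis n k x * `|d k| ^+ 3).
  rewrite !mulr_sumr -big_split /=; apply: eq_bigr => k _.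
  by rewrite real_normK ?num_real //; ring.
rewrite /d bern_moment2 // -subr_ge0.
have -> : x * (1 - x) / (2 * n%:R) * A - ((A - m * c) / 2 * (x * (1 - x) / n%:R)
    + m / 6 * (\sum_(k < n.+1) bern_basis n k x * `|d k| ^+ 3)) =
    m / 6 * (x * (1 - x) / n%:R / Num.sqrt n%:R -
      \sum_(k < n.+1) bern_basis n k x * `|d k| ^+ 3).
  by rewrite /c; field; rewrite !gt_eqF.
by rewrite mulr_ge0 ?divr_ge0 // subr_ge0 bern_moment3_abs_le.
Qed.

Lemma bernstein_voronovskaya F F1 F2 n (x : R) :
  deriv01 F F1 -> deriv01 F1 F2 -> bounded01 F2 -> (0 < n)%N -> I01 x ->
  `|bernstein n F x - F x - x * (1 - x) / (2 * n%:R) * F2 x| <=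
    x * (1 - x) / (2 * n%:R) * omega1_tilde F2 (1 / (3 * Num.sqrt n%:R)).
Proof.
move=> hF hF1 bF2 n0 Ix; case/andP: (Ix) => x0 x1.
apply: le_omega1_tilde => // [|phi phi_cvx phi_maj].
  by rewrite divr_ge0 ?mulr_ge0 ?subr_ge0.
have c_gt0 : (0 : R) < 1 / (3 * Num.sqrt n%:R).
  by rewrite divr_gt0 ?mulr_gt0 ?sqrtr_gt0 ?ltr0n.
have phi_ge0 s : 0 <= s -> 0 <= phi s.
  by move=> s0; apply: le_trans (omega1_ge0 bF2 s0) (phi_maj s s0).
have [m m0 phi_le] := concave_supergradient phi_cvx c_gt0 phi_ge0.
apply: (bernstein_taylor_le hF hF1 n0 Ix m0) => u /andP[u0 u1].
have Iu : I01 u by rewrite /I01 /= !ltW.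
apply: le_trans (omega1_ub bF2 Iu Ix) _.
by apply: le_trans (phi_maj _ (normr_ge0 _)) _; apply: phi_le.
Qed.

Lemma bernstein_sub_le F F1 F2 n (x : R) :
  deriv01 F F1 -> deriv01 F1 F2 -> bounded01 F2 -> (0 < n)%N -> I01 x ->
  `|bernstein n F x - F x| <= x * (1 - x) / (2 * n%:R) * unorm F2.
Proof.
move=> hF hF1 bF2 n0 Ix.
have := bernstein_taylor_le (K := 0) hF hF1 n0 Ix (lexx 0).
rewrite mulr0 subr0; apply => u /andP[u0 u1]; rewrite subr0 mul0r addr0.
by apply: unorm_ub; rewrite // /I01 /= !ltW.
Qed.

End Voronovskaya.

Section BernsteinProduct.
Variable R : realType.
Variables f f1 f2 g g1 g2 h1 h2 : R -> R.
Hypotheses (hf1 : deriv01 f f1) (hf2 : deriv01 f1 f2).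
Hypotheses (hg1 : deriv01 g g1) (hg2 : deriv01 g1 g2).
Hypotheses (hh1 : deriv01 (fun x => f x * g x) h1) (hh2 : deriv01 h1 h2).

Lemma deriv01_mul2E (x : R) : 0 < x < 1 ->
  h2 x = f2 x * g x + 2 * (f1 x * g1 x) + f x * g2 x.
Proof.
have D_unique (F : R -> R) (u a b : R) : is_derive u 1 F a -> is_derive u 1 F b -> a = b.
  by move=> Fa Fb; rewrite -(@derive_val _ _ _ _ _ _ _ Fa) -(@derive_val _ _ _ _ _ _ _ Fb).
have h1E u : 0 < u < 1 -> h1 u = f1 u * g u + f u * g1 u.
  move=> u01; apply: D_unique (deriv01_is_derive hh1 u01) _.
  have := deriv01_is_derive hf1 u01; have := deriv01_is_derive hg1 u01.
  by move=> ? ?; apply: is_derive_eq; rewrite /GRing.scale /=; ring.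
move=> x01; case/andP: (x01) => x0 x1.
apply: D_unique (deriv01_is_derive hh2 x01) _.
apply: (near_eq_is_derive (f := fun u => f1 u * g u + f u * g1 u)).
  apply/nbhs_ballP; exists (Num.min x (1 - x)); first by rewrite /= lt_min x0 subr_gt0.
  move=> y; rewrite /ball /= lt_min !ltr_norml => /andP[/andP[? ?] /andP[? ?]].
  by rewrite h1E //; apply/andP; split; lra.
have := deriv01_is_derive hf1 x01; have := deriv01_is_derive hg1 x01.
have := deriv01_is_derive hf2 x01; have := deriv01_is_derive hg2 x01.
by move=> ? ? ? ?; apply: is_derive_eq; rewrite /GRing.scale /=; ring.
Qed.

(* At the endpoints nothing ties [h2] to [f] and [g]; the weight [x (1 - x)] vanishes there. *)
Lemma x1x_mul_deriv01_mul2E (x : R) : I01 x -> x * (1 - x) * h2 x =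
  x * (1 - x) * (f2 x * g x + 2 * (f1 x * g1 x) + f x * g2 x).
Proof.
case/andP=> x0 x1; have [->|x_neq0] := eqVneq x 0; first by rewrite !mul0r.
have [->|x_neq1] := eqVneq x 1; first by rewrite subrr mulr0 !mul0r.
by rewrite deriv01_mul2E // !lt_neqAle eq_sym x_neq0 x_neq1 x0 x1.
Qed.

Hypotheses (cf2 : {within @I01 R, continuous f2}) (cg2 : {within @I01 R, continuous g2}).

Let bf := bounded01_cont (deriv01_cont hf1).
Let bg := bounded01_cont (deriv01_cont hg1).
Let bf1 := bounded01_cont (deriv01_cont hf2).
Let bg1 := bounded01_cont (deriv01_cont hg2).
Let bf2 := bounded01_cont cf2.
Let bg2 := bounded01_cont cg2.

Lemma bounded01_mul2 : bounded01 h2.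
Proof.
apply: (bounded01_interior (M := unorm f2 * unorm g + 2 * (unorm f1 * unorm g1)
  + unorm f * unorm g2)) => u u01.
have Iu : I01 u by case/andP: u01 => ? ?; rewrite /I01 /= !ltW.
have norm_mul (F G : R -> R) :
  bounded01 F -> bounded01 G -> `|F u * G u| <= unorm F * unorm G.
  by move=> bF bG; rewrite normrM ler_pM ?unorm_ub.
rewrite deriv01_mul2E //; apply: le_trans (ler_normD _ _) _.
rewrite lerD ?norm_mul //; apply: le_trans (ler_normD _ _) _.
by rewrite lerD ?norm_mul // normrM ger0_norm // ler_pM2l // norm_mul.
Qed.

Lemma bernstein_mul_remainder_le n (x : R) : (0 < n)%N -> I01 x ->
  `|bernstein n (fun y => f y * g y) x - bernstein n f x * bernstein n g x
    - x * (1 - x) / n%:R * f1 x * g1 x|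
  <= x * (1 - x) / (2 * n%:R) *
     (omega1_tilde h2 (1 / (3 * Num.sqrt n%:R))
      + unorm g * omega1_tilde f2 (1 / (3 * Num.sqrt n%:R))
      + unorm f * omega1_tilde g2 (1 / (3 * Num.sqrt n%:R))
      + x * (1 - x) / (2 * n%:R) * unorm f2 * unorm g2).
Proof.
move=> n0 Ix; set a := x * (1 - x) / (2 * n%:R); set c := 1 / (3 * Num.sqrt n%:R).
have nR_gt0 : (0 : R) < n%:R by rewrite ltr0n.
have e_fg := bernstein_voronovskaya hh1 hh2 bounded01_mul2 n0 Ix.
have e_f := bernstein_voronovskaya hf1 hf2 bf2 n0 Ix.
have e_g := bernstein_voronovskaya hg1 hg2 bg2 n0 Ix.
have d_f := bernstein_sub_le hf1 hf2 bf2 n0 Ix.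
have d_g := bernstein_sub_le hg1 hg2 bg2 n0 Ix.
have -> : bernstein n (fun y => f y * g y) x - bernstein n f x * bernstein n g x
    - x * (1 - x) / n%:R * f1 x * g1 x =
  (bernstein n (fun y => f y * g y) x - f x * g x - a * h2 x)
  - f x * (bernstein n g x - g x - a * g2 x)
  - g x * (bernstein n f x - f x - a * f2 x)
  - (bernstein n f x - f x) * (bernstein n g x - g x).
  have h2E : a * h2 x = a * (f2 x * g x + 2 * (f1 x * g1 x) + f x * g2 x).
    by rewrite /a mulrAC x1x_mul_deriv01_mul2E // mulrAC.
  by rewrite h2E /a; field; rewrite gt_eqF.
have -> : a * (omega1_tilde h2 c + unorm g * omega1_tilde f2 c +
    unorm f * omega1_tilde g2 c + a * unorm f2 * unorm g2) =
  a * omega1_tilde h2 c + unorm f * (a * omega1_tilde g2 c)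
  + unorm g * (a * omega1_tilde f2 c) + a * unorm f2 * (a * unorm g2) by ring.
have bnd (F G M N : R) : `|F| <= M -> `|G| <= N -> `|F * G| <= M * N.
  by move=> ? ?; rewrite normrM ler_pM.
apply: le_trans (ler_normB _ _) _; apply: lerD; last exact: bnd.
apply: le_trans (ler_normB _ _) _; apply: lerD; last exact: bnd (unorm_ub bg Ix) e_f.
apply: le_trans (ler_normB _ _) _; apply: lerD => //.
exact: bnd (unorm_ub bf Ix) e_g.
Qed.

End BernsteinProduct.

Theorem theorem2p1 (R : realType) (f f1 f2 g g1 g2 h1 h2 : R -> R)
  (hf1 : deriv01 f f1) (hf2 : deriv01 f1 f2) (cf2 : {within (@I01 R), continuous f2})
  (hg1 : deriv01 g g1) (hg2 : deriv01 g1 g2) (cg2 : {within (@I01 R), continuous g2})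
  (hh1 : deriv01 (fun x => f x * g x) h1) (hh2 : deriv01 h1 h2)
  (n : nat) (hn : (0 < n)%N) (x : R) (hx : 0 <= x <= 1) :
  n%:R * `| bernstein n (fun y => f y * g y) x
            - bernstein n f x * bernstein n g x
            - x * (1 - x) / n%:R * f1 x * g1 x |
  <= x * (1 - x) / 2 *
     (omega1_tilde h2 (1 / (3 * Num.sqrt n%:R))
      + unorm g * omega1_tilde f2 (1 / (3 * Num.sqrt n%:R))
      + unorm f * omega1_tilde g2 (1 / (3 * Num.sqrt n%:R))
      + 1 / (2 * n%:R) * unorm f2 * unorm g2).
Proof.
have n_gt0 : (0 : R) < n%:R by rewrite ltr0n.
case/andP: (hx) => x0 x1; have w0 : 0 <= x * (1 - x) by rewrite mulr_ge0 ?subr_ge0.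
have w1 : x * (1 - x) <= 1 by nra.
apply: le_trans (ler_wpM2l (ler0n _ n)
  (bernstein_mul_remainder_le hf1 hf2 hg1 hg2 hh1 hh2 cf2 cg2 hn hx)) _.
rewrite mulrA (_ : n%:R * _ = x * (1 - x) / 2); last by field; rewrite gt_eqF.
rewrite ler_wpM2l ?divr_ge0 // lerD2l.
apply: ler_wpM2r; first exact: unorm_ge0 (bounded01_cont cg2).
apply: ler_wpM2r; first exact: unorm_ge0 (bounded01_cont cf2).
by rewrite ler_pM2r // invr_gt0 mulr_gt0.
Qed.
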